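(* Let $\mu>0$, $u_a\in\mathbb{R}$, $\alpha_->0$, $\alpha_+>0$, $u_->u_+$, $\sigma_0\in(u_+,u_-)$, $\omega_0\ge0$. Set $\alpha_l\equiv\alpha_-$, $\alpha_r\equiv\alpha_+$, $u_l(t)=u_a+(u_--u_a)e^{-\mu t}$, $u_r(t)=u_a+(u_+-u_a)e^{-\mu t}$. Then the initial value problem $$\frac{d\omega}{dt}=(\alpha_r-\alpha_l)\sigma-(\alpha_ru_r-\alpha_lu_l),\quad \frac{d(\omega\sigma)}{dt}=(\alpha_ru_r-\alpha_lu_l)\sigma-(\alpha_ru_r^2-\alpha_lu_l^2)+\mu(u_a-\sigma)\omega,$$ $$\omega(0)=\omega_0,\qquad \sigma(0)\omega(0)=\sigma_0\omega_0,$$ has a solution $(\omega,\sigma)\in\mathcal{C}^1([0,\infty))^2$ satisfying Lax's entropy condition $u_r(t)<\sigma(t)<u_l(t)$ for all $t\ge0$. *)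

From Stdlib Require Import Reals.
Open Scope R_scope.

(* f has derivative f' at every point of [0, +oo), where the derivative is
   taken within [0, +oo) (so at t = 0 it is the right derivative). *)
Definition has_deriv_nonneg (f f' : R -> R) : Prop :=
  forall t, 0 <= t ->
    limit1_in (fun h => (f (t + h) - f t) / h)
              (fun h => h <> 0 /\ 0 <= t + h) (f' t) 0.

Definition continuous_nonneg (g : R -> R) : Prop :=
  forall t, 0 <= t -> limit1_in g (fun s => 0 <= s) (g t) t.

Definition C1_nonneg_with (f f' : R -> R) : Prop :=
  has_deriv_nonneg f f' /\ continuous_nonneg f'.

From Stdlib Require Import Reals Lra.
From Coquelicot Require Import Coquelicot.
Open Scope R_scope.

(* With x = 1 - exp (- mu t) as new time variable, the ansatz
   omega = P (x) / mu and sigma = u_r + exp (- mu t) Z (x) turns the system into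
   P' = (a_r - a_l) Z + a_l d and the Riccati equation P Z' = a_l (d - Z)^2 - a_r Z^2,
   where d = u_- - u_+ = (u_l - u_r) exp (mu t); the Lax condition becomes 0 < Z < d.
   For omega_0 > 0 this is solved in closed form with P = sqrt D for a quadratic D
   with D (0) = (mu omega_0)^2; for omega_0 = 0 the stationary point
   Z = sqrt a_l d / (sqrt a_r + sqrt a_l) of the Riccati equation, with P linear, works. *)

Lemma has_deriv_nonneg_of_is_derive (f f' : R -> R) :
  (forall t, 0 <= t -> is_derive f t (f' t)) -> has_deriv_nonneg f f'.
Proof.
  intros Hf t Ht eps Heps.
  destruct (proj1 (is_derive_Reals _ _ _) (Hf t Ht) eps Heps) as [del Hdel].
  exists del; split; [apply cond_pos |].
  intros h [[Hh0 _] Hh]; simpl in *; unfold R_dist in *.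
  rewrite Rminus_0_r in Hh; apply Hdel; auto.
Qed.

Lemma continuous_nonneg_of_continuity_pt (g : R -> R) :
  (forall t, 0 <= t -> continuity_pt g t) -> continuous_nonneg g.
Proof.
  intros Hg t Ht eps Heps.
  destruct (Hg t Ht eps Heps) as [alp [Halp Hd]].
  exists alp; split; auto.
  intros s [Hs Hts]; simpl in *.
  destruct (Req_dec t s) as [<- | Hne].
  - unfold R_dist; rewrite Rminus_diag, Rabs_R0; auto.
  - apply Hd; repeat split; auto.
Qed.

Lemma C1_nonneg_with_of_is_derive (f f' : R -> R) :
  (forall t, 0 <= t -> is_derive f t (f' t)) ->
  (forall t, 0 <= t -> continuity_pt f' t) -> C1_nonneg_with f f'.
Proof.
  split; [apply has_deriv_nonneg_of_is_derive | apply continuous_nonneg_of_continuity_pt];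
    assumption.
Qed.

Lemma continuity_pt_of_is_derive (f : R -> R) (t l : R) :
  is_derive f t l -> continuity_pt f t.
Proof.
  intros Hf; apply derivable_continuous_pt; exists l; apply is_derive_Reals, Hf.
Qed.

Lemma exp_neg_le_1 (mu t : R) : 0 < mu -> 0 <= t -> exp (- mu * t) <= 1.
Proof.
  intros Hmu Ht; rewrite <- exp_0.
  destruct (Req_dec t 0) as [-> | Ht0].
  - replace (- mu * 0) with 0 by ring; lra.
  - left; apply exp_increasing; nra.
Qed.

(* The Riccati equation is multiplied out by P, which vanishes at x = 0 when omega_0 = 0. *)
Definition riccati_profile (A B d : R) (P Z Z' : R -> R) : Prop :=
  forall x, 0 <= x ->
    is_derive P x ((A - B) * Z x + B * d) /\
    is_derive Z x (Z' x) /\ continuity_pt Z' x /\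
    P x * Z' x = B * (d - Z x) ^ 2 - A * Z x ^ 2 /\
    0 < Z x < d.

Section Reduction.

Variables (mu ua am ap um up : R) (P Z Z' : R -> R).
Hypotheses (Hmu : 0 < mu) (Hprof : riccati_profile ap am (um - up) P Z Z').

Definition profile_omega t := P (1 - exp (- mu * t)) / mu.
Definition profile_sigma t :=
  ua + (up - ua) * exp (- mu * t) + exp (- mu * t) * Z (1 - exp (- mu * t)).
Definition profile_sigma' t :=
  exp (- mu * t) * (- mu * (up - ua) - mu * Z (1 - exp (- mu * t))
                    + mu * exp (- mu * t) * Z' (1 - exp (- mu * t))).

Lemma one_sub_exp_nonneg t : 0 <= t -> 0 <= 1 - exp (- mu * t).
Proof. intros Ht; generalize (exp_neg_le_1 mu t Hmu Ht); lra. Qed.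

Lemma profile_at t : 0 <= t ->
  let x := 1 - exp (- mu * t) in
  is_derive P x ((ap - am) * Z x + am * (um - up)) /\
  is_derive Z x (Z' x) /\ continuity_pt Z' x /\
  P x * Z' x = am * (um - up - Z x) ^ 2 - ap * Z x ^ 2 /\ 0 < Z x < um - up.
Proof. intros Ht; apply Hprof, one_sub_exp_nonneg, Ht. Qed.

Lemma is_derive_profile_omega t : 0 <= t ->
  is_derive profile_omega t (exp (- mu * t) * ((ap - am) * Z (1 - exp (- mu * t)) + am * (um - up))).
Proof.
  intros Ht; destruct (profile_at t Ht) as (HP & _).
  unfold profile_omega; auto_derive; [exact (ex_intro _ _ HP) |].
  erewrite is_derive_unique by exact HP; unfold Rminus; field; lra.
Qed.

Lemma is_derive_profile_sigma t : 0 <= t -> is_derive profile_sigma t (profile_sigma' t).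
Proof.
  intros Ht; destruct (profile_at t Ht) as (_ & HZ & _).
  unfold profile_sigma; auto_derive; [exact (ex_intro _ _ HZ) |].
  erewrite is_derive_unique by exact HZ; unfold profile_sigma', Rminus; ring.
Qed.

Lemma continuity_pt_profile_sigma' t : 0 <= t -> continuity_pt profile_sigma' t.
Proof.
  intros Ht; unfold profile_sigma'.
  apply continuity_pt_mult; [eapply continuity_pt_of_is_derive; auto_derive; reflexivity |].
  apply continuity_pt_plus.
  - destruct (profile_at t Ht) as (_ & HZ & _).
    eapply continuity_pt_of_is_derive; auto_derive; [exact (ex_intro _ _ HZ) | reflexivity].
  - apply continuity_pt_mult; [eapply continuity_pt_of_is_derive; auto_derive; reflexivity |].
    apply (continuity_pt_comp (fun t => 1 - exp (- mu * t)) Z').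
    + eapply continuity_pt_of_is_derive; auto_derive; reflexivity.
    + apply (profile_at t Ht).
Qed.

Lemma is_derive_profile_omega_sigma t : 0 <= t ->
  let ul := ua + (um - ua) * exp (- mu * t) in
  let ur := ua + (up - ua) * exp (- mu * t) in
  is_derive (fun t => profile_omega t * profile_sigma t) t
    ((ap * ur - am * ul) * profile_sigma t - (ap * ur ^ 2 - am * ul ^ 2)
     + mu * (ua - profile_sigma t) * profile_omega t).
Proof.
  intros Ht ul ur.
  destruct (profile_at t Ht) as (HP & HZ & _ & HR & _).
  unfold profile_omega, profile_sigma; auto_derive.
  { repeat split; [exact (ex_intro _ _ HP) | exact (ex_intro _ _ HZ)]. }
  erewrite (is_derive_unique P) by exact HP; erewrite (is_derive_unique Z) by exact HZ.
  revert HR; unfold ur, ul, Rminus.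
  set (E := exp (- mu * t)); set (p := P (1 + - E)).
  set (z := Z (1 + - E)); set (z' := Z' (1 + - E)); intros HR.
  (* the identity holds modulo the Riccati equation, which enters with weight E^2 *)
  match goal with |- ?L = ?R =>
    assert (Hdiff : L - R = E ^ 2 * (p * z' - (am * (um + - up + - z) ^ 2 + - (ap * z ^ 2))))
      by (field; lra) end.
  rewrite HR in Hdiff; lra.
Qed.

Lemma profile_sigma_lax t : 0 <= t ->
  ua + (up - ua) * exp (- mu * t) < profile_sigma t < ua + (um - ua) * exp (- mu * t).
Proof.
  intros Ht; destruct (profile_at t Ht) as (_ & _ & _ & _ & Hbound).
  unfold profile_sigma; generalize (exp_pos (- mu * t)); split; nra.
Qed.

Lemma lax_solution_of_riccati_profile (sigma0 omega0 : R) :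
  P 0 = mu * omega0 -> (up + Z 0) * omega0 = sigma0 * omega0 ->
  let al := am in
  let ar := ap in
  let ul := fun t => ua + (um - ua) * exp (- mu * t) in
  let ur := fun t => ua + (up - ua) * exp (- mu * t) in
  exists (omega omega' sigma sigma' : R -> R),
    C1_nonneg_with omega omega' /\
    C1_nonneg_with sigma sigma' /\
    (forall t, 0 <= t ->
       omega' t = (ar - al) * sigma t - (ar * ur t - al * ul t)) /\
    has_deriv_nonneg (fun t => omega t * sigma t)
      (fun t => (ar * ur t - al * ul t) * sigma t
                - (ar * (ur t)^2 - al * (ul t)^2)
                + mu * (ua - sigma t) * omega t) /\
    omega 0 = omega0 /\
    sigma 0 * omega 0 = sigma0 * omega0 /\
    (forall t, 0 <= t -> ur t < sigma t < ul t).
Proof.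
  intros HP0 HZ0 al ar ul ur.
  exists profile_omega, (fun t => (ar - al) * profile_sigma t - (ar * ur t - al * ul t)),
    profile_sigma, profile_sigma'.
  split; [| split; [| split; [| split; [| split; [| split]]]]].
  - apply C1_nonneg_with_of_is_derive.
    + intros t Ht.
      replace (_ - _) with (exp (- mu * t) * ((ap - am) * Z (1 - exp (- mu * t)) + am * (um - up)))
        by (unfold profile_sigma, al, ar, ur, ul; ring).
      apply is_derive_profile_omega, Ht.
    + intros t Ht; apply continuity_pt_minus.
      * apply continuity_pt_mult; [apply continuity_pt_const; intros ? ?; reflexivity |].
        apply (continuity_pt_of_is_derive _ _ _ (is_derive_profile_sigma t Ht)).
      * eapply continuity_pt_of_is_derive; unfold ur, ul; auto_derive; reflexivity.
  - apply C1_nonneg_with_of_is_derive;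
      [apply is_derive_profile_sigma | apply continuity_pt_profile_sigma'].
  - reflexivity.
  - apply has_deriv_nonneg_of_is_derive; intros t Ht; apply is_derive_profile_omega_sigma, Ht.
  - unfold profile_omega; rewrite Rmult_0_r, exp_0, Rminus_diag, HP0; field; lra.
  - unfold profile_omega, profile_sigma; rewrite Rmult_0_r, exp_0, Rminus_diag, HP0.
    replace (mu * omega0 / mu) with omega0 by (field; lra).
    rewrite <- HZ0; ring.
  - apply profile_sigma_lax.
Qed.

End Reduction.

Section PositiveProfile.

Variables (A B m c d : R).
Hypotheses (HA : 0 < A) (HB : 0 < B) (Hm : 0 < m) (Hc : 0 < c) (Hcd : c < d).

(* Here m = P (0) = mu omega_0.  For A = B the solution is P = b; in general P = sqrt D,
   and Y = (P - b) / (A - B), written so as to stay regular at A = B, satisfies Y' = Z. *)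
Definition prof_b x := m + B * d * x.
Definition prof_W x := m * c + B * d ^ 2 * x.
Definition prof_N x := 2 * m * c * x + B * d ^ 2 * x ^ 2.
Definition prof_D x := prof_b x ^ 2 + (A - B) * prof_N x.
Definition prof_P x := sqrt (prof_D x).
Definition prof_Y x := prof_N x / (prof_b x + prof_P x).
Definition prof_Z x := (prof_W x - B * d * prof_Y x) / prof_P x.

Lemma prof_D_ge x : 0 <= x -> m ^ 2 <= prof_D x.
Proof.
  intros Hx; unfold prof_D, prof_b, prof_N.
  replace ((m + B * d * x) ^ 2 + (A - B) * (2 * m * c * x + B * d ^ 2 * x ^ 2))
    with (m ^ 2 + 2 * m * x * (A * c + B * (d - c)) + A * B * (d * x) ^ 2) by ring.
  assert (0 <= A * B * (d * x) ^ 2) by (apply Rmult_le_pos; [nra | apply pow2_ge_0]).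
  assert (0 <= A * c + B * (d - c)) by nra.
  assert (0 <= m * x) by nra.
  nra.
Qed.

Lemma prof_b_pos x : 0 <= x -> 0 < prof_b x.
Proof. intros Hx; unfold prof_b; assert (0 <= B * d * x) by (apply Rmult_le_pos; nra); lra. Qed.

Lemma prof_P_ge x : 0 <= x -> m <= prof_P x.
Proof.
  intros Hx; unfold prof_P; rewrite <- (sqrt_pow2 m) by lra.
  apply sqrt_le_1_alt, prof_D_ge, Hx.
Qed.

Lemma prof_P_pos x : 0 <= x -> 0 < prof_P x.
Proof. intros Hx; generalize (prof_P_ge x Hx); lra. Qed.

Lemma prof_P_sqr x : 0 <= x -> prof_P x ^ 2 = prof_D x.
Proof.
  intros Hx; unfold prof_P; rewrite pow2_sqrt; [reflexivity |].
  generalize (prof_D_ge x Hx); nra.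
Qed.

Lemma prof_N_eq x : 0 <= x -> prof_N x = prof_Y x * (prof_b x + prof_P x).
Proof.
  intros Hx; unfold prof_Y; field.
  generalize (prof_b_pos x Hx) (prof_P_pos x Hx); lra.
Qed.

Lemma prof_W_eq x : 0 <= x -> prof_W x = prof_Z x * prof_P x + B * d * prof_Y x.
Proof. intros Hx; unfold prof_Z; field; generalize (prof_P_pos x Hx); lra. Qed.

(* P^2 - b^2 = (A - B) N, divided by b + P. *)
Lemma prof_b_eq x : 0 <= x -> prof_b x = prof_P x - (A - B) * prof_Y x.
Proof.
  intros Hx; generalize (prof_P_sqr x Hx) (prof_N_eq x Hx).
  unfold prof_D; intros HPD HNY.
  apply Rmult_eq_reg_r with (prof_b x + prof_P x);
    [| generalize (prof_b_pos x Hx) (prof_P_pos x Hx); lra].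
  rewrite HNY in HPD; nra.
Qed.

Lemma is_derive_prof_P x : 0 <= x ->
  is_derive prof_P x ((A - B) * prof_Z x + B * d).
Proof.
  intros Hx.
  assert (HD : is_derive prof_D x (2 * (B * d * prof_b x + (A - B) * prof_W x)))
    by (unfold prof_D, prof_b, prof_N, prof_W; auto_derive; [exact I | ring]).
  replace ((A - B) * prof_Z x + B * d)
    with (2 * (B * d * prof_b x + (A - B) * prof_W x) / (2 * sqrt (prof_D x))).
  - apply is_derive_sqrt; [exact HD |]; generalize (prof_D_ge x Hx); nra.
  - fold (prof_P x); generalize (prof_P_pos x Hx); intros HP.
    rewrite (prof_W_eq x Hx), (prof_b_eq x Hx); field; lra.
Qed.

Lemma is_derive_prof_Y x : 0 <= x -> is_derive prof_Y x (prof_Z x).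
Proof.
  intros Hx.
  assert (HN : is_derive prof_N x (2 * prof_W x))
    by (unfold prof_N, prof_W; auto_derive; [exact I | ring]).
  assert (Hb : is_derive prof_b x (B * d)) by (unfold prof_b; auto_derive; [exact I | ring]).
  generalize (prof_P_pos x Hx) (prof_b_pos x Hx); intros HP Hbp.
  assert (HP' := is_derive_prof_P x Hx).
  unfold prof_Y at 1; auto_derive.
  - repeat split; try (eexists; eassumption); lra.
  - rewrite (is_derive_unique (fun y : R => prof_N y) x _ HN),
      (is_derive_unique (fun y : R => prof_b y) x _ Hb),
      (is_derive_unique (fun y : R => prof_P y) x _ HP').
    rewrite (prof_N_eq x Hx), (prof_W_eq x Hx).
    field_simplify_eq; [rewrite (prof_b_eq x Hx); ring | lra].
Qed.

Lemma is_derive_prof_Z x : 0 <= x ->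
  is_derive prof_Z x ((B * (d - prof_Z x) ^ 2 - A * prof_Z x ^ 2) / prof_P x).
Proof.
  intros Hx.
  assert (HW : is_derive prof_W x (B * d ^ 2))
    by (unfold prof_W; auto_derive; [exact I | ring]).
  assert (HY := is_derive_prof_Y x Hx); assert (HP := is_derive_prof_P x Hx).
  generalize (prof_P_pos x Hx); intros HPp.
  unfold prof_Z at 1; auto_derive.
  - repeat split; try (eexists; eassumption); lra.
  - rewrite (is_derive_unique (fun y : R => prof_W y) x _ HW),
      (is_derive_unique (fun y : R => prof_Y y) x _ HY),
      (is_derive_unique (fun y : R => prof_P y) x _ HP),
      (prof_W_eq x Hx).
    field; lra.
Qed.

Lemma prof_Z_bounds x : 0 <= x -> 0 < prof_Z x < d.
Proof.
  intros Hx.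
  generalize (prof_P_pos x Hx) (prof_b_pos x Hx); intros HP Hb.
  assert (HY : 0 <= prof_Y x).
  { unfold prof_Y, prof_N; apply Rdiv_le_0_compat; [| lra].
    assert (0 <= m * c * x) by (apply Rmult_le_pos; nra).
    assert (0 <= B * d ^ 2 * x ^ 2) by (apply Rmult_le_pos; nra).
    lra. }
  assert (Hpos : prof_Z x * prof_P x * (prof_b x + prof_P x)
                 = m * (m * c + c * prof_P x + B * d * x * (d - c)) + B * d ^ 2 * x * prof_P x).
  { transitivity (prof_W x * (prof_b x + prof_P x) - B * d * (prof_Y x * (prof_b x + prof_P x)));
      [rewrite (prof_W_eq x Hx); ring |].
    rewrite <- (prof_N_eq x Hx); unfold prof_W, prof_N, prof_b; ring. }
  assert (Hneg : (d - prof_Z x) * prof_P x = m * (d - c) + A * d * prof_Y x).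
  { transitivity (d * prof_P x - prof_W x + B * d * prof_Y x); [rewrite (prof_W_eq x Hx); ring |].
    replace (d * prof_P x) with (d * (prof_b x + (A - B) * prof_Y x))
      by (rewrite (prof_b_eq x Hx); ring).
    unfold prof_b, prof_W; ring. }
  split.
  - assert (0 < m * (m * c + c * prof_P x + B * d * x * (d - c))).
    { apply Rmult_lt_0_compat; [lra |].
      assert (0 <= B * d * x * (d - c)) by (apply Rmult_le_pos; [apply Rmult_le_pos |]; nra).
      nra. }
    assert (0 <= B * d ^ 2 * x * prof_P x) by (apply Rmult_le_pos; [apply Rmult_le_pos |]; nra).
    assert (0 < prof_P x * (prof_b x + prof_P x)) by nra.
    nra.
  - assert (0 <= A * d * prof_Y x) by (apply Rmult_le_pos; nra).
    nra.
Qed.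

Lemma prof_P_0 : prof_P 0 = m.
Proof.
  unfold prof_P, prof_D, prof_b, prof_N.
  replace ((m + B * d * 0) ^ 2 + (A - B) * (2 * m * c * 0 + B * d ^ 2 * 0 ^ 2)) with (m ^ 2) by ring.
  apply sqrt_pow2; lra.
Qed.

Lemma prof_Z_0 : prof_Z 0 = c.
Proof.
  unfold prof_Z, prof_Y; rewrite prof_P_0; unfold prof_W, prof_N, prof_b.
  field; lra.
Qed.

Lemma prof_riccati_profile :
  riccati_profile A B d prof_P prof_Z
    (fun x => (B * (d - prof_Z x) ^ 2 - A * prof_Z x ^ 2) / prof_P x).
Proof.
  intros x Hx; generalize (prof_P_pos x Hx); intros HP.
  split; [| split; [| split; [| split]]].
  - apply is_derive_prof_P, Hx.
  - apply is_derive_prof_Z, Hx.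
  - apply continuity_pt_div; [| apply (continuity_pt_of_is_derive _ _ _ (is_derive_prof_P x Hx)) | lra].
    eapply continuity_pt_of_is_derive; auto_derive; [| reflexivity].
    repeat split; exact (ex_intro _ _ (is_derive_prof_Z x Hx)).
  - field; lra.
  - apply prof_Z_bounds, Hx.
Qed.

End PositiveProfile.

Lemma stationary_riccati_profile (A B d : R) : 0 < A -> 0 < B -> 0 < d ->
  riccati_profile A B d (fun x => sqrt A * sqrt B * d * x)
    (fun _ => sqrt B * d / (sqrt A + sqrt B)) (fun _ => 0).
Proof.
  intros HA HB Hd x _.
  assert (Ha := sqrt_lt_R0 A HA); assert (Hb := sqrt_lt_R0 B HB).
  assert (HA2 := sqrt_sqrt A (Rlt_le _ _ HA)); assert (HB2 := sqrt_sqrt B (Rlt_le _ _ HB)).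
  set (a := sqrt A) in *; set (b := sqrt B) in *.
  split; [| split; [| split; [| split]]].
  - auto_derive; [exact I |]. rewrite <- HA2, <- HB2; field; lra.
  - auto_derive; [exact I | reflexivity].
  - apply continuity_pt_const; intros ? ?; reflexivity.
  - rewrite <- HA2, <- HB2; field; lra.
  - split; [apply Rdiv_lt_0_compat; nra |].
    apply Rmult_lt_reg_r with (a + b); [lra |].
    unfold Rdiv; rewrite Rmult_assoc, Rinv_l, Rmult_1_r by lra; nra.
Qed.

Theorem mainTheorem14
  (mu ua am ap um up sigma0 omega0 : R)
  (Hmu : 0 < mu) (Ham : 0 < am) (Hap : 0 < ap) (Hu : up < um)
  (Hs0 : up < sigma0 < um) (Ho0 : 0 <= omega0) :
  let al := am in
  let ar := ap in
  let ul := fun t => ua + (um - ua) * exp (- mu * t) in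
  let ur := fun t => ua + (up - ua) * exp (- mu * t) in
  exists (omega omega' sigma sigma' : R -> R),
    C1_nonneg_with omega omega' /\
    C1_nonneg_with sigma sigma' /\
    (forall t, 0 <= t ->
       omega' t = (ar - al) * sigma t - (ar * ur t - al * ul t)) /\
    has_deriv_nonneg (fun t => omega t * sigma t)
      (fun t => (ar * ur t - al * ul t) * sigma t
                - (ar * (ur t)^2 - al * (ul t)^2)
                + mu * (ua - sigma t) * omega t) /\
    omega 0 = omega0 /\
    sigma 0 * omega 0 = sigma0 * omega0 /\
    (forall t, 0 <= t -> ur t < sigma t < ul t).
Proof.
  destruct Ho0 as [Ho0 | <-].
  - assert (Hm : 0 < mu * omega0) by nra.
    eapply lax_solution_of_riccati_profile;
      [exact Hmu | apply (prof_riccati_profile ap am (mu * omega0) (sigma0 - up)); lra | |].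
    + apply prof_P_0; lra.
    + rewrite prof_Z_0 by lra; ring.
  - eapply lax_solution_of_riccati_profile;
      [exact Hmu | apply stationary_riccati_profile; lra | |]; cbv beta; ring.
Qed.
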